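(* (Flow extension lemma.) Let $\Sigma=(V,E)$ be a finite directed network in which every edge has capacity $1$, which is inner-superbalanced, and whose boundary is partitioned as $\partial\Sigma=B_1\sqcup B_2\sqcup B_3$ with $S(B_1)=0$. Let $v$ be a $\{0,1\}$-valued flow that is reachable from $B_1$. Then there exists a $\{0,1\}$-valued flow $\tilde v$ extending $v$ (i.e. $\tilde v^e\ge v^e$ for every edge $e$) such that $\tilde v-v$ is a max flow on $B_2$. Furthermore, $\tilde v$ can be chosen so that $\tilde v-v$ is a collection of $S(B_2)$ edge-disjoint directed paths from $B_2$ to $B_2^c=\partial\Sigma\setminus B_2$, and in particular $\tilde v$ is reachable from $B_1\sqcup B_2$.
   Context: For a directed edge $e$, $s(e)$ and $t(e)$ denote its source and target. A flow on a directed network with capacities $c$ is a function $v:E\to\mathbb R_{\ge0}$ with $v^e\le c^e$ and, at every non-boundary vertex $x$, $\sum_{e:t(e)=x}v^e=\sum_{e:s(e)=x}v^e$. The flux of $v$ out of $A\subset\partial\Sigma$ is $S(A;v)=\sum_{e:s(e)\in A}v^e-\sum_{e:t(e)\in A}v^e$, and $S(A)$ is the maximum flux out of $A$ over all flows; a max flow on $A$ is a flow attaining it. A network is inner-superbalanced if at each non-boundary vertex the total capacity of incoming edges is at most that of outgoing edges. A $\{0,1\}$-valued flow $v$ is reachable from a boundary set $A$ if for every edge $e$ with $v^e\neq0$ there is a directed path, all of whose edges have $v$-value $1$, from a vertex of $A$ to $s(e)$. *)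

From HB Require Import structures.
From mathcomp Require Import all_boot all_order all_algebra.
Set Implicit Arguments. Unset Strict Implicit. Unset Printing Implicit Defensive.
Import Order.TTheory GRing.Theory Num.Theory.
Local Open Scope ring_scope.

Section Network.
Variables (R : realFieldType) (V E : finType) (s t : E -> V).

Definition is_flow (bd : {set V}) (c : E -> R) (v : E -> R) : Prop :=
  (forall e, 0 <= v e /\ v e <= c e) /\
  (forall x, x \notin bd ->
     \sum_(e | t e == x) v e = \sum_(e | s e == x) v e).

Definition flux (A : {set V}) (v : E -> R) : R :=
  \sum_(e | s e \in A) v e - \sum_(e | t e \in A) v e.

Definition max_flux (bd : {set V}) (c : E -> R) (A : {set V}) (m : R) : Prop :=
  (exists w, is_flow bd c w /\ flux A w = m) /\
  (forall w, is_flow bd c w -> flux A w <= m).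

Definition is_max_flow (bd : {set V}) (c : E -> R) (A : {set V}) (v : E -> R)
  : Prop :=
  is_flow bd c v /\ (forall w, is_flow bd c w -> flux A w <= flux A v).

Definition inner_superbalanced (bd : {set V}) (c : E -> R) : Prop :=
  forall x, x \notin bd -> \sum_(e | t e == x) c e <= \sum_(e | s e == x) c e.

Definition zero_one (v : E -> R) : Prop := forall e, v e = 0 \/ v e = 1.

Fixpoint is_walk (a : V) (p : seq E) (b : V) : Prop :=
  match p with
  | [::] => a = b
  | e :: p' => s e = a /\ is_walk (t e) p' b
  end.

Definition walk_vertices (a : V) (p : seq E) : seq V := a :: map t p.

Definition is_path (a : V) (p : seq E) (b : V) : Prop :=
  is_walk a p b /\ uniq (walk_vertices a p).

Definition reachable_from (A : {set V}) (v : E -> R) : Prop :=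
  forall e, v e != 0 ->
    exists a p, a \in A /\ is_walk a p (s e) /\ (forall f, f \in p -> v f = 1).

End Network.

From HB Require Import structures.
From mathcomp Require Import all_boot all_order all_algebra.
From mathcomp Require Import ring lra.
Set Implicit Arguments. Unset Strict Implicit. Unset Printing Implicit Defensive.
Import Order.TTheory GRing.Theory Num.Theory.
Local Open Scope ring_scope.

(* Let W be the set of vertices reachable from B1 along edges.  A path from B1
   to B2 or B3 would be a flow with flux 1 out of B1, so W meets the boundary
   only in B1; and v, being reachable from B1, lives on edges leaving W.
   Among the 0/1 flows p supported off v choose one of maximal flux out of B2,
   and let X be the set of vertices reachable from B2 in its residual graph
   (edges outside v and p forwards, edges of p backwards).  Maximality keeps X
   away from B1 and B3, since an augmenting path would raise the flux by 1.
   For any flow w the flux out of B2 is the flux out of X \ W; comparing it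
   edge by edge with the flux of p out of X leaves only the superbalance
   defect of the interior set X ∩ W, which is nonnegative, and the flux of v
   out of X ∩ W, which vanishes.  So p is a max flow on B2.  Finally p
   splits into at least flux(p) edge-disjoint paths from B2 to B1 ∪ B3, and
   v plus these paths is the required extension. *)

Section Flux.
Variables (R : realFieldType) (V E : finType) (s t : E -> V).

Definition ind (pT : predType E) (A : pT) (e : E) : R := (e \in A)%:R.

Definition conservative (bd : {set V}) (f : E -> R) : Prop :=
  forall x, x \notin bd -> flux s t [set x] f = 0.

Lemma fluxE D (f : E -> R) :
  flux s t D f = \sum_e f e * ((s e \in D)%:R - (t e \in D)%:R).
Proof.
rewrite /flux !(big_mkcond (fun e => _ \in D)) -sumrB; apply: eq_bigr => e _.
by case: (s e \in D); case: (t e \in D);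
  rewrite /= ?subrr ?subr0 ?sub0r ?mulr1 ?mulrN1 ?mulr0.
Qed.

Lemma eq_flux D (f g : E -> R) : f =1 g -> flux s t D f = flux s t D g.
Proof. by move=> fg; rewrite !fluxE; apply: eq_bigr => e _; rewrite fg. Qed.

Lemma fluxD D (f g : E -> R) :
  flux s t D (fun e => f e + g e) = flux s t D f + flux s t D g.
Proof. by rewrite !fluxE -big_split; apply: eq_bigr => e _; rewrite mulrDl. Qed.

Lemma flux_eq0 D (f : E -> R) : f =1 (fun=> 0) -> flux s t D f = 0.
Proof. by move=> f0; rewrite fluxE big1 // => e _; rewrite f0 mul0r. Qed.

Lemma flux_set1 x (f : E -> R) :
  flux s t [set x] f = \sum_(e | s e == x) f e - \sum_(e | t e == x) f e.
Proof. by rewrite /flux; congr (_ - _); apply: eq_bigl => e; rewrite in_set1. Qed.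

Lemma flux_sum_set1 D (f : E -> R) : flux s t D f = \sum_(x in D) flux s t [set x] f.
Proof.
have sum_set1 y : \sum_(x in D) (y \in [set x])%:R = (y \in D)%:R :> R.
  have [yD|yD] := boolP (y \in D); last first.
    by rewrite big1 // => x xD; rewrite in_set1; case: eqP => // yx; rewrite yx xD in yD.
  rewrite (bigD1 y) //= in_set1 eqxx big1 ?addr0 // => x /andP[_ xy].
  by rewrite in_set1 eq_sym (negbTE xy).
under [RHS]eq_bigr => x _ do rewrite fluxE.
rewrite fluxE exchange_big; apply: eq_bigr => e _.
by rewrite -mulr_sumr sumrB !sum_set1.
Qed.

Lemma flux_subset_conservative (B D : {set V}) (f : E -> R) :
  B \subset D -> {in D :\: B, forall x, flux s t [set x] f = 0} ->
  flux s t D f = flux s t B f.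
Proof.
move=> BD f0; rewrite !flux_sum_set1 (big_setID B) /= (setIidPr BD).
by rewrite [X in _ + X]big1 ?addr0.
Qed.

Lemma is_flowE bd c (f : E -> R) :
  is_flow s t bd c f <-> (forall e, 0 <= f e /\ f e <= c e) /\ conservative bd f.
Proof.
rewrite /is_flow /conservative.
have consE x : flux s t [set x] f = 0 <->
    \sum_(e | t e == x) f e = \sum_(e | s e == x) f e.
  by rewrite flux_set1; split=> [/eqP|->]; rewrite ?subrr // subr_eq0 => /eqP ->.
by split=> -[cap cons]; split=> // x /cons /consE.
Qed.

Lemma fluxZ D c (f : E -> R) : flux s t D (fun e => c * f e) = c * flux s t D f.
Proof. by rewrite !fluxE mulr_sumr; apply: eq_bigr => e _; rewrite mulrA. Qed.

Lemma flux_edge D e0 :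
  flux s t D (fun e => (e == e0)%:R : R) = (s e0 \in D)%:R - (t e0 \in D)%:R.
Proof.
rewrite fluxE (bigD1 e0) //= eqxx mul1r big1 ?addr0 // => e /negbTE ->.
by rewrite mul0r.
Qed.

Lemma conservative_ends (bd : {set V}) a b (f : E -> R) : a \in bd -> b \in bd ->
  (forall D, flux s t D f = (a \in D)%:R - (b \in D)%:R) -> conservative bd f.
Proof.
move=> abd bbd fluxf x xbd; rewrite fluxf !in_set1.
have neq_x y : y \in bd -> (y == x) = false.
  by move=> ybd; apply: contraNF xbd => /eqP <-.
by rewrite !neq_x // subrr.
Qed.

Lemma is_flow_ind bd (pT : predType E) (A : pT) :
  conservative bd (ind A) -> is_flow s t bd (fun=> 1) (ind A).
Proof. by move=> consA; apply/is_flowE; split=> // e; rewrite /ind ler0n lern1 leq_b1. Qed.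

Lemma eq_is_flow bd c (f g : E -> R) : f =1 g -> is_flow s t bd c f -> is_flow s t bd c g.
Proof.
move=> fg /is_flowE[cap cons]; apply/is_flowE; split=> [e|x xbd]; first by rewrite -fg.
by rewrite -(eq_flux [set x] fg) cons.
Qed.

End Flux.

Arguments ind {R E pT} A e.
Arguments eq_flux {R V E s t D f g}.
Arguments flux_eq0 {R V E s t D f}.

Section Walks.
Variables (R : realFieldType) (V E : finType) (s t : E -> V).
Local Notation ind := (@ind R E _).

(* Arcs of the residual graph: [(e, true)] runs along [e], [(e, false)] against it. *)
Definition arc_src (k : E * bool) : V := if k.2 then s k.1 else t k.1.
Definition arc_tgt (k : E * bool) : V := if k.2 then t k.1 else s k.1.

Fixpoint arc_walk (a : V) (l : seq (E * bool)) (b : V) : Prop :=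
  if l is k :: l' then arc_src k = a /\ arc_walk (arc_tgt k) l' b else a = b.

Definition arc_flow (l : seq (E * bool)) (e : E) : R :=
  ((e, true) \in l)%:R - ((e, false) \in l)%:R.

Lemma flux_arc_walk D a l b : uniq l -> arc_walk a l b ->
  flux s t D (arc_flow l) = (a \in D)%:R - (b \in D)%:R.
Proof.
elim: l a => [|[e0 dir] l IH] a /=.
  by move=> _ ->; rewrite subrr flux_eq0 // => e; rewrite /arc_flow subrr.
move=> /andP[e0l ul] [<- w].
have arc_flow_cons : arc_flow ((e0, dir) :: l) =1
    fun e => (if dir then 1 else -1) * (e == e0)%:R + arc_flow l e.
  move=> e; rewrite /arc_flow !in_cons !xpair_eqE.
  have [->|_] := eqVneq e e0; last by rewrite mulr0 add0r.
  by move: e0l; case: (dir) => /negbTE e0l; rewrite /= ?e0l /=; ring.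
rewrite (eq_flux arc_flow_cons) fluxD fluxZ flux_edge (IH _ ul w).
by case: (dir); rewrite /arc_src /arc_tgt /=; ring.
Qed.

Definition fwd_arcs (p : seq E) : seq (E * bool) := [seq (e, true) | e <- p].

Lemma arc_walk_fwd a p b : arc_walk a (fwd_arcs p) b <-> is_walk s t a p b.
Proof. by elim: p a => [|e p IH] a //=; rewrite IH. Qed.

Lemma flux_walk D a p b : uniq p -> is_walk s t a p b ->
  flux s t D (ind p) = (a \in D)%:R - (b \in D)%:R.
Proof.
have inj_fwd : injective (fun e : E => (e, true)) by move=> e f [].
move=> up /arc_walk_fwd w; rewrite -(flux_arc_walk D _ w) ?map_inj_uniq //.
apply: eq_flux => e; rewrite /arc_flow /ind.
have /negbTE -> : (e, false) \notin fwd_arcs p by apply/mapP => -[].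
by rewrite (mem_map inj_fwd) subr0.
Qed.

Lemma path_uniq a p b : is_path s t a p b -> uniq p.
Proof. by case=> _ /andP[_ /map_uniq]. Qed.

Lemma walk_prefix a p b e : is_walk s t a p b -> e \in p ->
  exists2 p1, is_walk s t a p1 (s e) & {subset p1 <= p}.
Proof.
elim: p a => [|f p IH] a //= [<- w]; rewrite in_cons => /predU1P[->|/(IH _ w)].
  by exists [::].
case=> p1 w1 sub1; exists (f :: p1) => //= g.
by rewrite !in_cons => /predU1P[->|/sub1->]; rewrite ?eqxx ?orbT.
Qed.

Lemma walk_closed (A : {set V}) a p b : (forall e, s e \in A -> t e \in A) ->
  is_walk s t a p b -> a \in A -> b \in A.
Proof. by move=> closedA; elim: p a => [|e p IH] a /= => [->|[<- /IH w /closedA]]. Qed.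

Lemma reachable_add_paths (A B : {set V}) (v : E -> R) (ps : seq (V * seq E)) :
  reachable_from s t A v ->
  (forall r, r \in ps -> r.1 \in B /\ exists b, is_walk s t r.1 r.2 b) ->
  {in flatten (map snd ps), forall e, v e = 0} ->
  reachable_from s t (A :|: B) (fun e => v e + ind (flatten (map snd ps)) e).
Proof.
set F := flatten _ => v_reach ps_walks v_F e.
have [eF _|eF] := boolP (e \in F).
  have [r r_ps e_r] : exists2 r, r \in ps & e \in r.2.
    by case/flattenP: eF => _ /mapP[r r_ps ->]; exists r.
  have [r1B [b w]] := ps_walks r r_ps.
  have [p1 w1 p1_r] := walk_prefix w e_r.
  exists r.1, p1; split; first by rewrite inE r1B orbT.
  split=> // f /p1_r f_r.
  have fF : f \in F by apply/flattenP; exists r.2; first exact: map_f.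
  by rewrite v_F // /ind fF add0r.
rewrite /ind (negbTE eF) addr0 => /v_reach[a [p1 [aA [w1 p1_1]]]].
exists a, p1; split; first by rewrite inE aA.
split=> // f /p1_1 vf1; rewrite vf1.
have /negbTE -> : f \notin F by apply/negP => /v_F; rewrite vf1 => /eqP; rewrite oner_eq0.
by rewrite addr0.
Qed.

Definition arc_rel (ok : pred (E * bool)) : rel V :=
  fun x y => [exists k, [&& ok k, arc_src k == x & arc_tgt k == y]].

Definition arc_reach (ok : pred (E * bool)) (B : {set V}) : {set V} :=
  [set y | [exists b in B, connect (arc_rel ok) b y]].

Lemma subset_arc_reach (ok : pred (E * bool)) (B : {set V}) : B \subset arc_reach ok B.
Proof.
by apply/subsetP => b bB; rewrite inE; apply/existsP; exists b; rewrite bB connect0.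
Qed.

Lemma arc_reach_closed (ok : pred (E * bool)) (B : {set V}) k : ok k ->
  arc_src k \in arc_reach ok B -> arc_tgt k \in arc_reach ok B.
Proof.
move=> okk; rewrite !inE => /existsP[b /andP[bB reach_k]].
apply/existsP; exists b; rewrite bB /=; apply: connect_trans reach_k _.
by apply: connect1; apply/existsP; exists k; rewrite okk !eqxx.
Qed.

Lemma arc_reachP (ok : pred (E * bool)) (B : {set V}) y : y \in arc_reach ok B ->
  exists b l, [/\ b \in B, arc_walk b l y, uniq (b :: map arc_tgt l) & all ok l].
Proof.
rewrite inE => /existsP[b /andP[bB /connectP[q qP ->]]].
case: (shortenP qP) => q' q'P uq' _.
suff [l [w ml okl]] :
    exists l, [/\ arc_walk b l (last b q'), map arc_tgt l = q' & all ok l].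
  by exists b, l; rewrite ml.
elim: q' b q'P {uq' bB qP} => [|x q' IH] b /=; first by exists [::].
case/andP=> /existsP[k /and3P[okk /eqP kb /eqP kx]] /IH[l [w ml okl]].
by exists (k :: l); rewrite /= kb kx ml okk.
Qed.

Definition forward (P : pred E) (k : E * bool) : bool := k.2 && P k.1.

Lemma forward_reachP (P : pred E) (B : {set V}) y : y \in arc_reach (forward P) B ->
  exists b p, [/\ b \in B, is_path s t b p y & all P p].
Proof.
case/arc_reachP=> b [l [bB w ul okl]].
have [p lE] : exists p, l = fwd_arcs p.
  exists (map fst l).
  by elim: l okl {w ul} => //= -[e [] l] IH /andP[//= _ /IH <-].
move: w ul okl; rewrite lE -map_comp all_map => /arc_walk_fwd w ul okl.
by exists b, p.
Qed.

End Walks.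

Arguments arc_flow {R E} l e.
Arguments flux_arc_walk {R V E s t} D {a l b}.
Arguments flux_walk {R V E s t} D {a p b}.

Section PathDecomposition.
Variables (R : realFieldType) (V E : finType) (s t : E -> V) (bd A : {set V}).
Hypothesis A_bd : A \subset bd.
Local Notation ind := (@ind R E _).

Lemma exists_path_out (q : {set E}) :
  conservative s t bd (ind q) -> 0 < flux s t A (ind q) ->
  exists a p b, [/\ a \in A, b \in bd :\: A, is_path s t a p b & {subset p <= q}].
Proof.
move=> cons_q flux_pos.
set Y := arc_reach s t (forward [in q]) A.
have [/existsP[b /andP[bY b_out]]|/existsPn Y_in] :=
  boolP [exists b, (b \in Y) && (b \in bd :\: A)].
  have [a [p [aA pp /allP pq]]] := forward_reachP bY.
  by exists a, p, b.
suff : flux s t Y (ind q) <= 0.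
  rewrite (flux_subset_conservative (subset_arc_reach _ _ _ _)); first lra.
  move=> x; rewrite inE => /andP[xA xY]; apply: cons_q.
  by apply: contra (Y_in x) => xbd; rewrite xY inE xA.
rewrite fluxE; apply: sumr_le0 => e _; rewrite /ind.
have closedY : e \in q -> s e \in Y -> t e \in Y.
  by move=> e_q; apply: (@arc_reach_closed _ _ s t _ A (e, true)).
have [e_q|_] := boolP (e \in q); last by rewrite mul0r.
by rewrite mul1r subr_le0; case: (s e \in Y) (closedY e_q) => [->|_]; rewrite ?ler0n.
Qed.

Lemma path_decomposition (q : {set E}) : conservative s t bd (ind q) ->
  exists ps : seq (V * seq E),
    [/\ forall r, r \in ps ->
          r.1 \in A /\ exists b, b \in bd :\: A /\ is_path s t r.1 r.2 b,
        uniq (flatten (map snd ps)),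
        {subset flatten (map snd ps) <= q},
        conservative s t bd (ind (flatten (map snd ps))) &
        flux s t A (ind (flatten (map snd ps))) = (size ps)%:R /\
        flux s t A (ind q) <= (size ps)%:R].
Proof.
have [n] := ubnP #|q|; elim: n q => // n IH q /ltnSE q_n cons_q.
have [flux_le0|flux_pos] := leP (flux s t A (ind q)) 0.
  have ind_nil : ind [::] =1 fun=> 0 by move=> e; rewrite /ind in_nil.
  by exists [::]; split=> //=; rewrite ?(flux_eq0 ind_nil) // => x _; rewrite flux_eq0.
have [a [p [b [aA b_out pp p_q]]]] := exists_path_out cons_q flux_pos.
have walk_p := proj1 pp; have uniq_p := path_uniq pp.
have [e0 e0p] : exists e, e \in p.
  have : p != [::].
    by apply/eqP=> p0; move: walk_p b_out; rewrite p0 => /= <-; rewrite inE aA.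
  by case: (p) => // e ? _; exists e; rewrite mem_head.
set q' := q :\: [set e in p].
have ind_q : ind q =1 fun e => ind q' e + ind p e.
  move=> e; rewrite /ind !inE /ind; have [ep|_] := boolP (e \in p).
    by rewrite p_q // add0r.
  by rewrite addr0.
have flux_p D : flux s t D (ind p) = (a \in D)%:R - (b \in D)%:R.
  exact: (flux_walk D uniq_p walk_p).
have cons_p : conservative s t bd (ind p).
  by apply: conservative_ends flux_p; [apply: (subsetP A_bd) | case/setDP: b_out].
have cons_q' : conservative s t bd (ind q').
  by move=> x xbd; have := cons_q x xbd; rewrite (eq_flux ind_q) fluxD cons_p // addr0.
have q'_lt : (#|q'| < #|q|)%N.
  apply: proper_card; apply/properP; split; first exact: subsetDl.
  by exists e0; rewrite ?p_q ?inE ?e0p.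
have [ps [ps_paths ps_uniq ps_q' ps_cons [ps_flux ps_ge]]] :=
  IH q' (leq_trans q'_lt q_n) cons_q'.
set F := flatten (map snd ps) in ps_uniq ps_q' ps_cons ps_flux ps_paths *.
have F_p e : e \in F -> e \notin p by move/ps_q'; rewrite !inE => /andP[].
have ind_pF : ind (p ++ F) =1 fun e => ind p e + ind F e.
  move=> e; rewrite /ind mem_cat; have [eF|_] := boolP (e \in F).
    by rewrite (negbTE (F_p e eF)) add0r.
  by rewrite orbF addr0.
exists ((a, p) :: ps); rewrite /= -/F; split.
- move=> r; rewrite in_cons => /predU1P[-> /=|/ps_paths //].
  by split=> //; exists b.
- rewrite cat_uniq uniq_p ps_uniq andbT; apply/hasPn => e /F_p.
  by apply: contra.
- by move=> e; rewrite mem_cat => /orP[/p_q //|/ps_q']; rewrite inE => /andP[].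
- by move=> x xbd; rewrite (eq_flux ind_pF) fluxD cons_p // ps_cons // addr0.
rewrite (eq_flux ind_pF) (eq_flux ind_q) !fluxD ps_flux flux_p aA.
case/setDP: b_out => _ /negbTE ->; rewrite /= -addn1 natrD; split; [ring | lra].
Qed.

End PathDecomposition.

Section Extension.
Variables (R : realFieldType) (V E : finType) (s t : E -> V) (B1 B2 B3 : {set V}).
Hypothesis hd12 : [disjoint B1 & B2].
Let bd := B1 :|: B2 :|: B3.
Let one := fun _ : E => 1 : R.
Hypotheses (hsb : inner_superbalanced s t bd one) (hS1 : max_flux s t bd one B1 0).
Variable v : E -> R.
Hypotheses (hv : is_flow s t bd one v) (hv01 : zero_one v)
  (hvr : reachable_from s t B1 v).
Local Notation ind := (@ind R E _).

Let W := arc_reach s t (forward predT) B1.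

Lemma W_closed e : s e \in W -> t e \in W.
Proof. exact: (@arc_reach_closed _ _ s t _ B1 (e, true)). Qed.

Lemma W_bd x : x \in W -> x \in bd -> x \in B1.
Proof.
case/forward_reachP=> b [p [bB1 pp _]] xbd; apply/contraT => xB1.
have bbd : b \in bd by rewrite /bd !inE bB1.
have flux_p D : flux s t D (ind p) = (b \in D)%:R - (x \in D)%:R.
  exact: (flux_walk D (path_uniq pp) (proj1 pp)).
have := hS1.2 _ (is_flow_ind (conservative_ends bbd xbd flux_p)).
by rewrite flux_p bB1 (negbTE xB1) subr0 ler10.
Qed.

Lemma v_supp_W e : v e != 0 -> s e \in W.
Proof.
case/hvr=> a [p [aB1 [w _]]]; apply: walk_closed W_closed w _.
exact: (subsetP (subset_arc_reach _ _ _ _)).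
Qed.

Definition augmentation (p : {set E}) : bool :=
  [forall (x | x \notin bd), flux s t [set x] (ind p) == 0] &&
  [forall (e | e \in p), v e == 0].

Lemma augmentationP (p : {set E}) :
  reflect (conservative s t bd (ind p) /\ {in p, forall e, v e = 0}) (augmentation p).
Proof.
apply: (iffP andP) => [[/forall_inP cons_p /forall_inP v_p]|[cons_p v_p]].
  by split=> [x /cons_p/eqP|e /v_p/eqP].
by split; [apply/forall_inP => x /cons_p -> | apply/forall_inP => e /v_p ->].
Qed.

Lemma exists_max_augmentation : exists2 p, augmentation p &
  forall q, augmentation q -> flux s t B2 (ind q) <= flux s t B2 (ind p).
Proof.
have aug0 : augmentation set0.
  apply/augmentationP; split=> [x _|e]; last by rewrite inE.
  by rewrite flux_eq0 // => e; rewrite /ind inE.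
by case: (arg_maxP (fun p : {set E} => flux s t B2 (ind p)) aug0) => p; exists p.
Qed.

Section MaximalAugmentation.
Variable p : {set E}.
Hypotheses (p_aug : augmentation p)
  (p_max : forall q, augmentation q -> flux s t B2 (ind q) <= flux s t B2 (ind p)).

Definition residual (k : E * bool) : bool :=
  if k.2 then (v k.1 == 0) && (k.1 \notin p) else k.1 \in p.

Let X := arc_reach s t residual B2.

Lemma augment_residual_walk l a b : uniq l -> all residual l -> arc_walk s t a l b ->
  a \in bd -> b \in bd ->
  exists2 q, augmentation q & ind q =1 fun e => ind p e + arc_flow l e.
Proof.
move=> ul /allP res_l w abd bbd; have /augmentationP[cons_p v_p] := p_aug.
pose q := [set e | ((e, true) \in l) || (e \in p) && ((e, false) \notin l)].
have ind_q : ind q =1 fun e => ind p e + arc_flow l e.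
  move=> e; rewrite /ind /arc_flow inE.
  have [fw|_] := boolP ((e, true) \in l).
    have /andP[_ /negbTE ep] := res_l _ fw.
    have /negbTE -> : (e, false) \notin l.
      by apply/negP => /res_l; rewrite /residual /= ep.
    by rewrite ep /=; ring.
  have [bw|_] := boolP ((e, false) \in l).
    by move: (res_l _ bw); rewrite /residual /= => -> /=; ring.
  by rewrite /= andbT; ring.
exists q => //; apply/augmentationP; split.
  move=> x xbd; rewrite (eq_flux ind_q) fluxD (cons_p x xbd) add0r.
  exact: (conservative_ends abd bbd (fun D => flux_arc_walk D ul w)).
move=> e; rewrite inE => /orP[/res_l/andP[/eqP //]|/andP[/v_p //]].
Qed.

Lemma X_bd x : x \in X -> x \in bd -> x \in B2.
Proof.
case/arc_reachP=> b [l [bB2 w /andP[_ /map_uniq ul] res_l]] xbd.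
apply/contraT => xB2.
have bbd : b \in bd by rewrite /bd !inE bB2 orbT.
have [q q_aug ind_q] := augment_residual_walk ul res_l w bbd xbd.
have := p_max q_aug; rewrite (eq_flux ind_q) fluxD (flux_arc_walk _ ul w).
by rewrite bB2 (negbTE xB2) subr0 /=; lra.
Qed.

Lemma interior_X x : x \in X -> x \notin B2 -> x \notin bd.
Proof. by move=> xX; apply: contra (X_bd xX). Qed.

Lemma interior_X_W x : x \in X -> x \in W -> x \notin bd.
Proof.
move=> xX xW; apply/negP => xbd.
by have := W_bd xW xbd; rewrite (disjointFl hd12 (X_bd xX xbd)).
Qed.

Let crossing (D : {set V}) e : R := (s e \in D)%:R - (t e \in D)%:R.

Lemma cut_edge (w : E -> R) e : 0 <= w e -> w e <= 1 ->
  w e * crossing (X :\: W) e <=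
  ind p e * crossing X e - one e * crossing (X :&: W) e + v e * crossing (X :&: W) e.
Proof.
move=> w_ge0 w_le1.
have closedW : (s e \in W) ==> (t e \in W) by apply/implyP; apply: W_closed.
have closedX_fwd : [&& s e \in X, v e == 0 & e \notin p] ==> (t e \in X).
  apply/implyP => /and3P[sX ve ep].
  by apply: (@arc_reach_closed _ _ s t _ B2 (e, true)); rewrite // /residual /= ve ep.
have closedX_bwd : (t e \in X) && (e \in p) ==> (s e \in X).
  by apply/implyP => /andP[tX ep]; apply: (@arc_reach_closed _ _ s t _ B2 (e, false)).
rewrite /crossing /ind /one !in_setD !in_setI.
case: (hv01 e) => ve.
  move: closedW closedX_fwd closedX_bwd; rewrite ve eqxx /=.
  case: (s e \in X); case: (t e \in X); case: (s e \in W); case: (t e \in W);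
    case: (e \in p) => /= h1 h2 h3; rewrite ?mulr1n ?mulr0n; first [done | lra].
have sW : s e \in W by apply: v_supp_W; rewrite ve oner_neq0.
have /negbTE ep : e \notin p.
  have /augmentationP[_ v_p] := p_aug.
  by apply/negP => /v_p; rewrite ve; apply/eqP/oner_neq0.
move: closedW closedX_fwd closedX_bwd; rewrite ve sW ep /=.
case: (s e \in X); case: (t e \in X); case: (t e \in W) => /= h1 h2 h3;
  rewrite ?mulr1n ?mulr0n; first [done | lra].
Qed.

Lemma max_augmentation_cut w :
  is_flow s t bd one w -> flux s t B2 w <= flux s t B2 (ind p).
Proof.
move=> /is_flowE[w_cap w_cons].
have /augmentationP[p_cons _] := p_aug.
have /is_flowE[_ v_cons] := hv.
have B2_X : B2 \subset X by apply: subset_arc_reach.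
have -> : flux s t B2 w = flux s t (X :\: W) w.
  symmetry; apply: flux_subset_conservative => [|x /setDP[/setDP[xX _] xB2]].
    apply/subsetP => x xB2; rewrite inE (subsetP B2_X) // andbT.
    apply/negP => xW; have := interior_X_W (subsetP B2_X _ xB2) xW.
    by rewrite /bd !inE xB2 orbT.
  exact: w_cons (interior_X xX xB2).
have -> : flux s t B2 (ind p) = flux s t X (ind p).
  symmetry; apply: flux_subset_conservative => // x /setDP[xX xB2].
  exact: p_cons (interior_X xX xB2).
have superbalanced_XW : 0 <= flux s t (X :&: W) one.
  rewrite flux_sum_set1; apply: sumr_ge0 => x /setIP[xX xW].
  by rewrite flux_set1 subr_ge0; apply: hsb (interior_X_W xX xW).
have v_XW : flux s t (X :&: W) v = 0.
  by rewrite flux_sum_set1 big1 // => x /setIP[xX xW]; apply: v_cons (interior_X_W xX xW).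
suff : flux s t (X :\: W) w <=
  flux s t X (ind p) - flux s t (X :&: W) one + flux s t (X :&: W) v by lra.
rewrite !fluxE -sumrB -big_split /=; apply: ler_sum => e _.
by have [w_ge0 w_le1] := w_cap e; apply: cut_edge.
Qed.

End MaximalAugmentation.

Lemma add_disjoint_flow (F : seq E) :
  conservative s t bd (ind F) -> {in F, forall e, v e = 0} ->
  is_flow s t bd one (fun e => v e + ind F e) /\ zero_one (fun e => v e + ind F e).
Proof.
move=> F_cons v_F; have /is_flowE[_ v_cons] := hv.
have vF01 : zero_one (fun e => v e + ind F e).
  move=> e; rewrite /ind; have [/v_F ->|_] := boolP (e \in F).
    by right; rewrite add0r.
  by rewrite addr0; apply: hv01.
split=> //; apply/is_flowE; split=> [e|x xbd].
  by rewrite /one; case: (vF01 e) => ->; lra.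
by rewrite fluxD v_cons ?F_cons ?addr0.
Qed.

End Extension.

Theorem lemma2 (R : realFieldType) (V E : finType) (s t : E -> V)
  (B1 B2 B3 : {set V})
  (hd12 : [disjoint B1 & B2]) (hd13 : [disjoint B1 & B3])
  (hd23 : [disjoint B2 & B3])
  (hsb : inner_superbalanced s t (B1 :|: B2 :|: B3) (fun _ => 1 : R))
  (hS1 : max_flux s t (B1 :|: B2 :|: B3) (fun _ => 1 : R) B1 0)
  (v : E -> R)
  (hv : is_flow s t (B1 :|: B2 :|: B3) (fun _ => 1 : R) v)
  (hv01 : zero_one v)
  (hvr : reachable_from s t B1 v) :
  exists vt : E -> R,
    [/\ is_flow s t (B1 :|: B2 :|: B3) (fun _ => 1 : R) vt,
        zero_one vt /\ (forall e, v e <= vt e),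
        is_max_flow s t (B1 :|: B2 :|: B3) (fun _ => 1 : R) B2 (fun e => vt e - v e),
        (exists ps : seq (V * seq E),
           [/\ max_flux s t (B1 :|: B2 :|: B3) (fun _ => 1 : R) B2 ((size ps)%:R : R),
               (forall q, q \in ps -> q.1 \in B2 /\
                  exists b, b \in (B1 :|: B3) /\ is_path s t q.1 q.2 b),
               uniq (flatten (map snd ps)) &
               (forall e, vt e - v e = (e \in flatten (map snd ps))%:R)])
      & reachable_from s t (B1 :|: B2) vt].
Proof.
have B2_bd : B2 \subset B1 :|: B2 :|: B3 by rewrite -setUA subsetU // subsetUl orbT.
have [p p_aug p_max] := exists_max_augmentation s t B1 B2 B3 v.
have /augmentationP[p_cons v_p] := p_aug.
have [ps [ps_paths ps_uniq ps_p ps_cons [ps_flux ps_ge]]] :=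
  path_decomposition B2_bd p_cons.
set F := flatten (map snd ps) in ps_paths ps_uniq ps_p ps_cons ps_flux *.
have v_F : {in F, forall e, v e = 0} by move=> e /ps_p /v_p.
have F_max (w : E -> R) :
    is_flow s t (B1 :|: B2 :|: B3) (fun=> 1) w -> flux s t B2 w <= (size ps)%:R.
  move=> w_flow; apply: le_trans _ ps_ge.
  exact: (max_augmentation_cut hd12 hsb hS1 hv hv01 hvr p_aug p_max w_flow).
have vt_v e : v e + ind F e - v e = ind F e by rewrite addrC addKr.
have [vt_flow vt01] := add_disjoint_flow hv hv01 ps_cons v_F.
exists (fun e => v e + ind F e); split=> //.
- by split=> // e; rewrite lerDl /ind ler0n.
- split; first exact: eq_is_flow (fun e => esym (vt_v e)) (is_flow_ind ps_cons).
  by move=> w /F_max; rewrite (eq_flux vt_v) ps_flux.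
- exists ps; split=> //.
    by split=> //; exists (ind F); split=> //; exact: is_flow_ind.
  move=> r /ps_paths[r1B2 [b [b_out pb]]]; split=> //; exists b; split=> //.
  by case/setDP: b_out; rewrite !inE => b_bd /negbTE b_B2; rewrite b_B2 orbF in b_bd.
apply: reachable_add_paths hvr _ v_F => r /ps_paths[r1B2 [b [_ [wb _]]]].
by split=> //; exists b.
Qed.
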